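(* Let $\mathbf{W}^0$ be a real $N\times N$ matrix, let $\mathbf{u}=(1,\dots,1)^T/\sqrt N\in\mathbb{R}^N$, $\mathbf{H}=\mathbf{u}\mathbf{u}^T$ and $\boldsymbol\Theta=\mathbf{I}-\mathbf{H}$, and for $n\ge1$ let $\mathbf{W}^\theta_n=(\mathbf{W}^0\boldsymbol\Theta)^{n-1}\mathbf{W}^0$. Then the motif cumulants of $\mathbf{W}^0$ satisfy, for all $n,m\ge1$, $$\kappa_n=\frac{1}{N^n}\,\mathbf{u}^T\mathbf{W}^\theta_n\mathbf{u}=\frac{1}{N^{n+1}}\sum_{i,j}\big((\mathbf{W}^0\boldsymbol\Theta)^{n-1}\mathbf{W}^0\big)_{ij},$$ $$\kappa_{n,m}=\frac{1}{N^{n+m}}\,\mathbf{u}^T\mathbf{W}^\theta_n\,\boldsymbol\Theta\,(\mathbf{W}^\theta_m)^T\mathbf{u}=\frac{1}{N^{n+m}}\,\mathbf{u}^T(\mathbf{W}^0\boldsymbol\Theta)^{n-1}\mathbf{W}^0\boldsymbol\Theta(\mathbf{W}^0)^T(\boldsymbol\Theta(\mathbf{W}^0)^T)^{m-1}\mathbf{u}.$$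
   Context: Notation: for an $N\times N$ matrix $\mathbf{X}$, $\langle\mathbf{X}\rangle=\frac1{N^2}\sum_{i,j}\mathbf{X}_{ij}$. Motif moments: for integers $n,m\ge0$, $\mu_{n,m}=\langle(\mathbf{W}^0)^n((\mathbf{W}^0)^T)^m\rangle/N^{n+m-1}$, and $\mu_n:=\mu_{n,0}$. A composition of a positive integer $n$ is an ordered tuple $(n_1,\dots,n_t)$ of positive integers with $n_1+\dots+n_t=n$; $\mathcal{C}(n)$ denotes the set of compositions of $n$. Motif cumulants: the numbers $\kappa_n$ ($n\ge1$) and $\kappa_{n,m}$ ($n,m\ge1$) are defined recursively (uniquely) by requiring, for all $n,m\ge1$, $$\mu_n=\sum_{(n_1,\dots,n_t)\in\mathcal{C}(n)}\prod_{i=1}^t\kappa_{n_i},\qquad \mu_{n,m}=\sum_{\substack{(n_1,\dots,n_t)\in\mathcal{C}(n)\\(m_1,\dots,m_s)\in\mathcal{C}(m)}}\Big(\prod_{i=2}^t\kappa_{n_i}\Big)\big(\kappa_{n_1,m_1}+\kappa_{n_1}\kappa_{m_1}\big)\Big(\prod_{j=2}^s\kappa_{m_j}\Big),$$ where an empty product equals $1$. *)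

From HB Require Import structures.
From mathcomp Require Import all_boot all_order all_algebra.
Set Implicit Arguments. Unset Strict Implicit. Unset Printing Implicit Defensive.
Import Order.TTheory GRing.Theory Num.Theory.
Local Open Scope ring_scope.

Definition mavg (R : fieldType) (N : nat) (X : 'M[R]_N) : R :=
  (N%:R ^+ 2)^-1 * \sum_(i < N) \sum_(j < N) X i j.

Definition motif_moment (R : fieldType) (N : nat) (W : 'M[R]_N) (n m : nat) : R :=
  mavg (W ^+ n * (W^T) ^+ m) / N%:R ^+ (n + m - 1).

(* Sum of F c over all compositions c = (c_1,...,c_t) of n, i.e. ordered
   tuples of positive integers summing to n (each part is <= n, and t <= n). *)
Definition comp_sum (R : nmodType) (n : nat) (F : seq nat -> R) : R :=
  \sum_(t < n.+1) \sum_(c : t.-tuple 'I_n.+1 |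
      (sumn (map val c) == n) && all (fun i => 0 < i)%N (map val c))
    F (map val c).

Definition is_motif_cumulants (R : fieldType) (N : nat) (W : 'M[R]_N)
    (kappa : nat -> R) (kappa2 : nat -> nat -> R) : Prop :=
  (forall n, (0 < n)%N ->
     motif_moment W n 0 = comp_sum n (fun c => \prod_(i <- c) kappa i)) /\
  (forall n m, (0 < n)%N -> (0 < m)%N ->
     motif_moment W n m =
       comp_sum n (fun c => comp_sum m (fun d =>
         (\prod_(i <- behead c) kappa i) *
         (kappa2 (head 0%N c) (head 0%N d) + kappa (head 0%N c) * kappa (head 0%N d)) *
         (\prod_(j <- behead d) kappa j)))).

Definition uvec (R : rcfType) (N : nat) : 'cV[R]_N := const_mx (Num.sqrt (N%:R))^-1.
Definition Theta (R : rcfType) (N : nat) : 'M[R]_N := 1%:M - uvec R N *m (uvec R N)^T.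
Definition Wtheta (R : rcfType) (N : nat) (W : 'M[R]_N) (n : nat) : 'M[R]_N :=
  (W *m Theta R N) ^+ (n - 1) *m W.

From mathcomp Require Import all_boot all_order all_algebra.
From mathcomp Require Import zify ring.
Import Order.TTheory GRing.Theory Num.Theory.
Set Implicit Arguments. Unset Strict Implicit. Unset Printing Implicit Defensive.
Local Open Scope ring_scope.

(* Write msum X for the sum of all entries of X, H = u u^T (all entries 1/N)
   and Theta = I - H.  Expanding every factor of W^n as W (Theta + H) and
   grouping by the last occurrence of H gives the last-block decomposition
     W^{j+1} = sum_k A_{j-k} (W Theta)^k W,   A_0 = 1, A_i = W^i H,
   and msum (A_i X) factorizes because H does.  After normalization this says
   that the moments g_n = <W^n>/N^{n-1} satisfy the renewal equation
   g_n = sum_k kapW_{k+1} g_{n-k-1} with kapW_n = <W^theta_n>/N^{n-1}, hence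
   g_n is the composition sum of products of the kapW (comp_prod).  Applying
   the decomposition to both W^n and (W^T)^m, and splitting once more at
   Theta + H in the middle, expresses the mixed moments through the same
   compositions and the two-index quantities kap2W.  Finally, the defining
   relations of the motif cumulants determine kappa and kappa2 uniquely
   (comp_prod_inj, bconv_inj), so they coincide with kapW and kap2W. *)

Definition is_comp (n : nat) (s : seq nat) : bool :=
  (sumn s == n) && all (fun i => 0 < i)%N s.

Lemma size_le_sumn (s : seq nat) : all (fun i => 0 < i)%N s -> (size s <= sumn s)%N.
Proof. by elim: s => //= x s IH /andP[x_gt0 /IH]; lia. Qed.

Lemma mem_le_sumn (s : seq nat) x : x \in s -> (x <= sumn s)%N.
Proof. by elim: s => //= y s IH; rewrite inE => /orP[/eqP->|/IH]; lia. Qed.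

Section CompositionSums.

Variable V : nmodType.

Definition comps_of_size (n : nat) (t : 'I_n.+1) : seq (seq nat) :=
  [seq map val (c : t.-tuple 'I_n.+1)
  | c in [pred c : t.-tuple 'I_n.+1 | is_comp n (map val c)]].

Definition comps (n : nat) : seq (seq nat) :=
  [seq s | t <- index_enum 'I_n.+1, s <- comps_of_size t].

Lemma comp_sum_comps n (F : seq nat -> V) : comp_sum n F = \sum_(s <- comps n) F s.
Proof.
rewrite /comps big_allpairs_dep; apply: eq_bigr => t _.
by rewrite /comps_of_size big_image; apply: eq_bigl => c; rewrite inE.
Qed.

Lemma mem_comps_of_size n (t : 'I_n.+1) s :
  s \in comps_of_size t -> is_comp n s && (size s == t).
Proof. by case/imageP => c; rewrite inE => c_comp ->; rewrite size_map size_tuple eqxx c_comp. Qed.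

Lemma mem_comps n s : (s \in comps n) = is_comp n s.
Proof.
apply/idP/idP => [|s_comp].
  by case/allpairsPdep => t [y [_ /mem_comps_of_size /andP[+ _] ->]].
have s_small x : x \in s -> (x < n.+1)%N.
  by move: s_comp => /andP[/eqP <- _] /mem_le_sumn; rewrite ltnS.
have size_s : (size s < n.+1)%N.
  by move: s_comp => /andP[/eqP <- /size_le_sumn]; rewrite ltnS.
have map_inord : map val (map (@inord n) s) = s.
  rewrite -map_comp -[RHS]map_id; apply/eq_in_map => x /s_small x_small /=.
  by rewrite inordK.
have size_tup : size (map (@inord n) s) == Ordinal size_s by rewrite size_map.
apply/allpairsPdep; exists (Ordinal size_s), s; split => //; first exact: mem_index_enum.
by apply/imageP; exists (Tuple size_tup); rewrite // inE /= map_inord.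
Qed.

Lemma uniq_comps n : uniq (comps n).
Proof.
apply: allpairs_uniq_dep; first exact: index_enum_uniq.
  move=> t _; rewrite map_inj_uniq ?enum_uniq //.
  by move=> c c' /(inj_map val_inj) /val_inj.
move=> [t1 s1] [t2 s2] /allpairsPdep [x [y [_ y_in [-> ->]]]]
  /allpairsPdep [x' [y' [_ y'_in [-> ->]]]] /= y_eq; subst y'.
move: y_in y'_in => /mem_comps_of_size /andP[_ /eqP sz] /mem_comps_of_size /andP[_ /eqP sz'].
by have -> : x = x' by apply: val_inj; rewrite /= -sz -sz'.
Qed.

Lemma comp_sum_enum n (F : seq nat -> V) (L : seq (seq nat)) :
  uniq L -> (forall s, (s \in L) = is_comp n s) -> comp_sum n F = \sum_(s <- L) F s.
Proof.
move=> L_uniq L_mem; rewrite comp_sum_comps; apply/perm_big/uniq_perm => //.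
  exact: uniq_comps.
by move=> s; rewrite mem_comps L_mem.
Qed.

Lemma comp_sum0 (F : seq nat -> V) : comp_sum 0 F = F [::].
Proof.
rewrite (@comp_sum_enum 0 F [:: [::]]) ?big_seq1 // => -[|[|x] s] //.
by rewrite inE /is_comp /= andbF.
Qed.

Lemma eq_comp_sum n (F G : seq nat -> V) :
  (forall s, is_comp n s -> F s = G s) -> comp_sum n F = comp_sum n G.
Proof.
move=> FG; rewrite !comp_sum_comps big_seq [RHS]big_seq.
by apply: eq_bigr => s; rewrite mem_comps => /FG.
Qed.

Lemma comp_sum_sumr n m (F : 'I_m -> seq nat -> V) :
  comp_sum n (fun c => \sum_(l < m) F l c) = \sum_(l < m) comp_sum n (F l).
Proof.
by rewrite comp_sum_comps exchange_big; apply: eq_bigr => l _; rewrite comp_sum_comps.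
Qed.

Lemma comp_sum_first n (F : seq nat -> V) : (0 < n)%N ->
  comp_sum n F = \sum_(k < n) comp_sum (n - k.+1) (fun c => F (k.+1 :: c)).
Proof.
move=> n_gt0; under eq_bigr do rewrite comp_sum_comps.
rewrite -(big_mkord xpredT (fun k => \sum_(s <- comps (n - k.+1)) F (k.+1 :: s))).
rewrite -(big_allpairs_dep (h := fun k c => k.+1 :: c)).
apply: comp_sum_enum.
  apply: allpairs_uniq_dep; first exact: iota_uniq.
    by move=> k _; exact: uniq_comps.
  by move=> [k1 c1] [k2 c2] _ _ /= [-> ->].
move=> s; apply/idP/idP.
  case/allpairsPdep => k [c [k_lt]]; rewrite mem_comps => /andP[/eqP c_sum c_pos] ->.
  by rewrite mem_iota in k_lt; rewrite /is_comp /= c_sum c_pos andbT; apply/eqP; lia.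
case: s => [|x c]; first by rewrite /is_comp /=; case: n n_gt0.
rewrite /is_comp /= => /andP[/eqP sum_xc /andP[x_gt0 c_pos]].
apply/allpairsPdep; exists x.-1, c; split; last by rewrite prednK.
  by rewrite mem_iota; lia.
by rewrite mem_comps /is_comp c_pos andbT; apply/eqP; lia.
Qed.

End CompositionSums.

Lemma comp_sumMl (R : pzSemiRingType) n a (F : seq nat -> R) :
  comp_sum n (fun c => a * F c) = a * comp_sum n F.
Proof. by rewrite !comp_sum_comps mulr_sumr. Qed.

Lemma comp_sumMr (R : pzSemiRingType) n a (F : seq nat -> R) :
  comp_sum n (fun c => F c * a) = comp_sum n F * a.
Proof. by rewrite !comp_sum_comps mulr_suml. Qed.

Section CompositionProducts.

Variable R : comPzRingType.

Definition comp_prod (kap : nat -> R) (n : nat) : R :=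
  comp_sum n (fun c => \prod_(i <- c) kap i).

Lemma comp_prod0 kap : comp_prod kap 0 = 1.
Proof. by rewrite /comp_prod comp_sum0 big_nil. Qed.

Lemma comp_prod_first kap n : (0 < n)%N ->
  comp_prod kap n = \sum_(k < n) kap k.+1 * comp_prod kap (n - k.+1).
Proof.
move=> n_gt0; rewrite /comp_prod comp_sum_first //; apply: eq_bigr => k _.
by rewrite -comp_sumMl; apply: eq_comp_sum => s _; rewrite big_cons.
Qed.

Lemma eq_comp_prod kap kap' n :
  (forall i, (0 < i <= n)%N -> kap i = kap' i) -> comp_prod kap n = comp_prod kap' n.
Proof.
move=> eq_kap; apply: eq_comp_sum => s /andP[/eqP s_sum /allP s_pos].
rewrite big_seq [RHS]big_seq; apply: eq_bigr => i i_in; apply: eq_kap.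
by rewrite s_pos //= -s_sum mem_le_sumn.
Qed.

Lemma renewal_comp_prod kap (G : nat -> R) : G 0%N = 1 ->
  (forall n, (0 < n)%N -> G n = \sum_(k < n) kap k.+1 * G (n - k.+1)%N) ->
  forall n, G n = comp_prod kap n.
Proof.
move=> G0 G_rec; elim/ltn_ind => -[_|n IH]; first by rewrite G0 comp_prod0.
rewrite G_rec // comp_prod_first //; apply: eq_bigr => k _.
by rewrite IH // subSS ltnS leq_subr.
Qed.

Lemma comp_prod_inj kap kap' :
  (forall n, (0 < n)%N -> comp_prod kap n = comp_prod kap' n) ->
  forall n, (0 < n)%N -> kap n = kap' n.
Proof.
move=> eq_cp; elim/ltn_ind => -[//|n] IH _.
have := eq_cp _ (ltn0Sn n); rewrite !comp_prod_first // !big_ord_recr /=.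
rewrite subnn !comp_prod0 !mulr1.
suff -> : \sum_(i < n) kap i.+1 * comp_prod kap (n.+1 - i.+1) =
          \sum_(i < n) kap' i.+1 * comp_prod kap' (n.+1 - i.+1) by move/addrI.
apply: eq_bigr => i _; rewrite IH ?ltnS //; congr (_ * _).
by apply: eq_comp_prod => j /andP[j_gt0 j_le]; apply: IH => //; lia.
Qed.

End CompositionProducts.

Section TwoSidedConvolution.

Variable R : comPzRingType.

(* bconv G f n m = sum over first parts k.+1 <= n, l.+1 <= m of
   G (n - k.+1) * f k.+1 l.+1 * G (m - l.+1): the shape of the two-index
   moment-cumulant relation once the tails of both compositions are summed. *)
Definition bconv (G : nat -> R) (f : nat -> nat -> R) (n m : nat) : R :=
  \sum_(k < n) \sum_(l < m) G (n - k.+1)%N * f k.+1 l.+1 * G (m - l.+1)%N.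

Lemma comp_sum2_first (kap : nat -> R) (k2 : nat -> nat -> R) n m :
  (0 < n)%N -> (0 < m)%N ->
  comp_sum n (fun c => comp_sum m (fun d =>
      (\prod_(i <- behead c) kap i) *
      (k2 (head 0%N c) (head 0%N d) + kap (head 0%N c) * kap (head 0%N d)) *
      (\prod_(j <- behead d) kap j))) =
  bconv (comp_prod kap) (fun a b => k2 a b + kap a * kap b) n m.
Proof.
move=> n_gt0 m_gt0; rewrite comp_sum_first //; apply: eq_bigr => k _.
under eq_comp_sum => c _ do rewrite comp_sum_first //.
rewrite comp_sum_sumr; apply: eq_bigr => l _ /=.
under eq_comp_sum => c _ do
  (under eq_comp_sum => d _ do rewrite -mulrA; rewrite !comp_sumMl).
by rewrite comp_sumMr mulrA.
Qed.

Lemma bconvB G f f' n m :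
  bconv G f n m - bconv G f' n m = bconv G (fun a b => f a b - f' a b) n m.
Proof.
rewrite /bconv -sumrB; apply: eq_bigr => k _; rewrite -sumrB.
by apply: eq_bigr => l _; rewrite mulrBr mulrBl.
Qed.

(* When G 0 = 1, the two-sided convolution determines f on positive indices:
   the term k = n.-1, l = m.-1 is f n m and all others involve smaller indices. *)
Lemma bconv_inj (G : nat -> R) f f' : G 0%N = 1 ->
  (forall n m, (0 < n)%N -> (0 < m)%N -> bconv G f n m = bconv G f' n m) ->
  forall n m, (0 < n)%N -> (0 < m)%N -> f n m = f' n m.
Proof.
move=> G0 eq_conv; pose d a b := f a b - f' a b.
have d_conv a b : (0 < a)%N -> (0 < b)%N -> bconv G d a b = 0.
  by move=> a_gt0 b_gt0; rewrite -bconvB eq_conv // subrr.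
suff d0 s a b : (a + b)%N = s -> (0 < a)%N -> (0 < b)%N -> d a b = 0.
  by move=> n m n_gt0 m_gt0; apply/eqP; rewrite -subr_eq0; apply/eqP; exact: d0.
elim/ltn_ind: s a b => s IH [//|a] [//|b] ab_s _ _.
have d_lower k l : (k < a.+1)%N -> (l < b.+1)%N -> (k < a)%N || (l < b)%N ->
    d k.+1 l.+1 = 0.
  by move=> k_lt l_lt kl; apply: (IH (k.+1 + l.+1)%N) => //; lia.
have := d_conv _ _ (ltn0Sn a) (ltn0Sn b).
rewrite /bconv big_ord_recr /= big1 => [|k _]; last first.
  apply: big1 => l _; have := ltn_ord k; have := ltn_ord l => l_lt k_lt.
  by rewrite d_lower ?mulr0 ?mul0r //; lia.
rewrite add0r big_ord_recr /= big1 => [|l _]; last first.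
  have := ltn_ord l => l_lt.
  by rewrite d_lower ?mulr0 ?mul0r //; lia.
by rewrite add0r !subnn G0 mulr1 mul1r.
Qed.

End TwoSidedConvolution.

Definition msum (V : nmodType) (N : nat) (X : 'M[V]_N) : V :=
  \sum_(i < N) \sum_(j < N) X i j.

Lemma msum_sum (V : nmodType) N I (r : seq I) (P : pred I) (F : I -> 'M[V]_N) :
  msum (\sum_(i <- r | P i) F i) = \sum_(i <- r | P i) msum (F i).
Proof.
rewrite /msum; under eq_bigr do under eq_bigr do rewrite summxE.
by under eq_bigr do rewrite exchange_big /=; rewrite exchange_big.
Qed.

Lemma msumD (V : nmodType) N (X Y : 'M[V]_N) : msum (X + Y) = msum X + msum Y.
Proof.
rewrite /msum -big_split; apply: eq_bigr => i _; rewrite -big_split.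
by apply: eq_bigr => j _; rewrite mxE.
Qed.

Lemma msum_tr (V : nmodType) N (X : 'M[V]_N) : msum X^T = msum X.
Proof.
by rewrite /msum exchange_big; apply: eq_bigr => i _; apply: eq_bigr => j _; rewrite mxE.
Qed.

Lemma trmxX (R : comPzSemiRingType) N (A : 'M[R]_N) k : (A ^+ k)^T = A^T ^+ k.
Proof.
elim: k => [|k IH]; first by rewrite !expr0 trmx1.
by rewrite exprS trmx_mul IH exprSr.
Qed.

Section MotifMatrices.

Variables (R : rcfType) (N : nat).

Local Notation u := (uvec R N).
Local Notation Th := (Theta R N).

Definition Hproj : 'M[R]_N := u *m u^T.

Lemma Hproj_entry i j : Hproj i j = N%:R^-1.
Proof. by rewrite !mxE big_ord1 !mxE -expr2 exprVn sqr_sqrtr. Qed.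

Lemma Theta_add_Hproj : Th + Hproj = 1.
Proof. exact: subrK. Qed.

Lemma Hproj_tr : Hproj^T = Hproj.
Proof. by rewrite trmx_mul trmxK. Qed.

Lemma Theta_tr : Th^T = Th.
Proof. by rewrite /Theta linearB /= trmx1 -/Hproj Hproj_tr. Qed.

Lemma msum_mulH (X Y : 'M[R]_N) :
  msum (X * Hproj * Y) = N%:R^-1 * msum X * msum Y.
Proof.
rewrite /msum -[in RHS]mulrA mulr_suml mulr_sumr; apply: eq_bigr => i _.
have entry j : (X * Hproj * Y) i j = N%:R^-1 * (\sum_(k < N) X i k) * \sum_(l < N) Y l j.
  rewrite mxE mulr_sumr; apply: eq_bigr => l _; rewrite mxE.
  by under eq_bigr do rewrite Hproj_entry; rewrite -mulr_suml [_ * N%:R^-1]mulrC.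
by under eq_bigr do rewrite entry; rewrite -mulr_sumr [in RHS]exchange_big mulrA.
Qed.

Lemma uvec_quad (X : 'M[R]_N) : (u^T *m X *m u) ord0 ord0 = N%:R^-1 * msum X.
Proof.
rewrite /msum exchange_big mulr_sumr mxE; apply: eq_bigr => j _.
rewrite mxE mulr_suml mulr_sumr; apply: eq_bigr => i _.
rewrite !mxE; set s := (Num.sqrt _)^-1.
have -> : N%:R^-1 = s * s :> R by rewrite -expr2 /s exprVn sqr_sqrtr.
ring.
Qed.

Variable W : 'M[R]_N.

Lemma WthetaS k : Wtheta W k.+1 = (W * Th) ^+ k * W.
Proof. by rewrite /Wtheta subn1. Qed.

Lemma Wtheta_tr m : (0 < m)%N -> (Wtheta W m)^T = W^T *m (Th *m W^T) ^+ (m - 1).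
Proof. by move=> m_gt0; rewrite /Wtheta trmx_mul trmxX trmx_mul Theta_tr. Qed.

(* A_i = W^i H (and A_0 = 1) is the block preceding the last theta-path. *)
Definition Ablock (i : nat) : 'M[R]_N := if i == 0%N then 1 else W ^+ i * Hproj.

(* Last-block decomposition: split each factor 1 = Theta + H of W^{j+1} and
   group by the position of the last H, so that W^{j+1} is the sum over k of
   A_{j-k} times the theta-path (W Theta)^k W. *)
Lemma expr_Ablock j : W ^+ j.+1 = \sum_(k < j.+1) Ablock (j - k) * Wtheta W k.+1.
Proof.
elim: j => [|j IH]; first by rewrite big_ord1 /Ablock /= mul1r WthetaS expr0 mul1r.
rewrite big_ord_recl subn0 WthetaS expr0 mul1r.
rewrite exprSr -[in LHS](mulr1 (W ^+ j.+1)) -Theta_add_Hproj mulrDr mulrDl addrC.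
congr (_ + _).
rewrite IH !mulr_suml; apply: eq_bigr => k _ /=.
by rewrite subSS !WthetaS exprSr !mulrA.
Qed.

Definition Aweight (i : nat) : R := if i == 0%N then 1 else N%:R^-1 * msum (W ^+ i).

Lemma msum_Ablock i (X : 'M[R]_N) : msum (Ablock i * X) = Aweight i * msum X.
Proof. by rewrite /Ablock /Aweight; case: eqP => _; rewrite ?mul1r ?msum_mulH. Qed.

Lemma msum_Ablock2 i j (X : 'M[R]_N) :
  msum (Ablock i * X * (Ablock j)^T) = Aweight i * msum X * Aweight j.
Proof.
rewrite -mulrA msum_Ablock -msum_tr trmx_mul trmxK msum_Ablock msum_tr.
by rewrite [Aweight j * _]mulrC mulrA.
Qed.

Lemma msum_split_Theta (X Y : 'M[R]_N) :
  msum (X * Y^T) = msum (X * Th * Y^T) + N%:R^-1 * msum X * msum Y.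
Proof.
by rewrite -[X in msum (X * _)]mulr1 -Theta_add_Hproj mulrDr mulrDl msumD msum_mulH msum_tr.
Qed.

Definition mnorm (n : nat) : R := Aweight n * (N%:R ^+ n)^-1.

Definition kapW (n : nat) : R := (N%:R ^+ n.+1)^-1 * msum (Wtheta W n).

Definition kap2W (n m : nat) : R :=
  (N%:R ^+ (n + m).+1)^-1 * msum (Wtheta W n * Th * (Wtheta W m)^T).

Lemma mnorm0 : mnorm 0 = 1.
Proof. by rewrite /mnorm /Aweight /= expr0 invr1 mulr1. Qed.

Lemma mnormE n : (0 < n)%N -> mnorm n = (N%:R ^+ n.+1)^-1 * msum (W ^+ n).
Proof. by case: n => // n _; rewrite /mnorm /Aweight /= exprS invfM; ring. Qed.

Lemma mnorm_renewal n : (0 < n)%N ->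
  mnorm n = \sum_(k < n) kapW k.+1 * mnorm (n - k.+1).
Proof.
case: n => // j _; rewrite mnormE // expr_Ablock msum_sum mulr_sumr.
apply: eq_bigr => k _; rewrite msum_Ablock subSS /mnorm /kapW.
have k_le := ltn_ord k.
rewrite (_ : j.+2 = (j - k) + k.+2)%N; last by lia.
by rewrite exprD invfM; ring.
Qed.

Lemma mixed_moment_bconv n m : (0 < n)%N -> (0 < m)%N ->
  (N%:R ^+ (n + m).+1)^-1 * msum (W ^+ n * W^T ^+ m) =
  bconv mnorm (fun a b => kap2W a b + kapW a * kapW b) n m.
Proof.
case: n => // i _; case: m => // j _.
rewrite expr_Ablock -trmxX expr_Ablock linear_sum mulr_suml (msum_sum _ xpredT) mulr_sumr.
apply: eq_bigr => k _; rewrite [Ablock _ * _ * _]mulr_sumr (msum_sum _ xpredT) mulr_sumr.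
apply: eq_bigr => l _; have k_le := ltn_ord k; have l_le := ltn_ord l.
rewrite /= trmx_mul mulmxE mulrA -[_ * (Wtheta W l.+1)^T]mulrA msum_Ablock2.
rewrite msum_split_Theta !subSS /mnorm /kap2W /kapW -!exprVn.
have -> : ((i.+1 + j.+1).+1 = (i - k) + (j - l) + k + l + 3)%N by lia.
rewrite !(exprD, exprS) expr0; ring.
Qed.

End MotifMatrices.

Section ThetaCumulants.

Variables (R : rcfType) (N : nat) (W : 'M[R]_N).

Lemma motif_momentE n m : (0 < n)%N ->
  motif_moment W n m = (N%:R ^+ (n + m).+1)^-1 * msum (W ^+ n * W^T ^+ m).
Proof.
move=> n_gt0; rewrite /motif_moment /mavg -/(msum _) mulrC mulrA -invfM -exprD.
by congr (_^-1 * _); congr (_ ^+ _); lia.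
Qed.

Lemma mnorm_comp_prod n : mnorm W n = comp_prod (kapW W) n.
Proof. exact: (renewal_comp_prod (mnorm0 W) (mnorm_renewal W) n). Qed.

Lemma motif_moment_single n : (0 < n)%N ->
  motif_moment W n 0 = comp_prod (kapW W) n.
Proof. by move=> n_gt0; rewrite motif_momentE // expr0 mulr1 addn0 -mnormE // mnorm_comp_prod. Qed.

Lemma motif_moment_mixed n m : (0 < n)%N -> (0 < m)%N ->
  motif_moment W n m =
  bconv (comp_prod (kapW W)) (fun a b => kap2W W a b + kapW W a * kapW W b) n m.
Proof.
move=> n_gt0 m_gt0; rewrite motif_momentE // mixed_moment_bconv //.
by apply: eq_bigr => k _; apply: eq_bigr => l _; rewrite !mnorm_comp_prod.
Qed.

Theorem motif_cumulantsE (kappa : nat -> R) (kappa2 : nat -> nat -> R) :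
  is_motif_cumulants W kappa kappa2 ->
  (forall n, (0 < n)%N -> kappa n = kapW W n) /\
  (forall n m, (0 < n)%N -> (0 < m)%N -> kappa2 n m = kap2W W n m).
Proof.
move=> [mom1 mom2].
have kappaE : forall n, (0 < n)%N -> kappa n = kapW W n.
  by apply: comp_prod_inj => n n_gt0; rewrite -motif_moment_single // mom1.
have comp_kappa n : comp_prod kappa n = comp_prod (kapW W) n.
  by apply: eq_comp_prod => i /andP[i_gt0 _]; exact: kappaE.
split=> // n m n_gt0 m_gt0; apply: (@addIr _ (kappa n * kappa m)).
rewrite ![in RHS]kappaE //.
apply: (bconv_inj (f := fun a b => kappa2 a b + kappa a * kappa b)
  (f' := fun a b => kap2W W a b + kapW W a * kapW W b) (comp_prod0 (kapW W))) => //.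
move=> a b a_gt0 b_gt0; rewrite -motif_moment_mixed // mom2 // comp_sum2_first //.
by apply: eq_bigr => k _; apply: eq_bigr => l _; rewrite !comp_kappa.
Qed.

End ThetaCumulants.

Lemma scaled_uvec_quad (R : rcfType) N (X : 'M[R]_N) k :
  (N%:R ^+ k)^-1 * ((uvec R N)^T *m X *m uvec R N) ord0 ord0 =
  (N%:R ^+ k.+1)^-1 * msum X.
Proof. by rewrite uvec_quad mulrA -invfM -exprSr. Qed.

Theorem mainTheorem2 (R : rcfType) (N : nat) (W : 'M[R]_N)
    (kappa : nat -> R) (kappa2 : nat -> nat -> R) :
  is_motif_cumulants W kappa kappa2 ->
  (forall n, (0 < n)%N ->
     kappa n = (N%:R ^+ n)^-1 * ((uvec R N)^T *m Wtheta W n *m uvec R N) ord0 ord0 /\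
     kappa n = (N%:R ^+ n.+1)^-1 *
               \sum_(i < N) \sum_(j < N) ((W *m Theta R N) ^+ (n - 1) *m W) i j) /\
  (forall n m, (0 < n)%N -> (0 < m)%N ->
     kappa2 n m = (N%:R ^+ (n + m))^-1 *
       ((uvec R N)^T *m Wtheta W n *m Theta R N *m (Wtheta W m)^T *m uvec R N) ord0 ord0 /\
     kappa2 n m = (N%:R ^+ (n + m))^-1 *
       ((uvec R N)^T *m (W *m Theta R N) ^+ (n - 1) *m W *m Theta R N *m W^T
          *m (Theta R N *m W^T) ^+ (m - 1) *m uvec R N) ord0 ord0).
Proof.
move=> /motif_cumulantsE [kappaE kappa2E]; split=> [n n_gt0 | n m n_gt0 m_gt0].
  by rewrite kappaE // scaled_uvec_quad.
rewrite kappa2E //; set u := uvec R N; set Th := Theta R N.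
have unfolded : u^T *m (W *m Th) ^+ (n - 1) *m W *m Th *m W^T *m (Th *m W^T) ^+ (m - 1) *m u =
                u^T *m Wtheta W n *m Th *m (Wtheta W m)^T *m u.
  by rewrite Wtheta_tr // /Wtheta !mulmxA.
have regrouped : u^T *m Wtheta W n *m Th *m (Wtheta W m)^T *m u =
                 u^T *m (Wtheta W n *m Th *m (Wtheta W m)^T) *m u by rewrite !mulmxA.
by rewrite unfolded regrouped scaled_uvec_quad.
Qed.
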